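(* Let $r\ge 2$ and $t\ge 2$ be integers, and let $n=a(r+t-1)+b$ with integers $a\ge 0$ and $0\le b\le r+t-2$. Suppose there exists a minimal $(r-1)$-$(r+t-1,r,1)$ covering of size $c$. Then $$a\left(\binom{r+t-1}{r}-c\right)+\binom{b}{r}\le ex_r\left(n,Tr(K_{1,t})\right).$$
   Context: For a graph $F$ with vertex set $\{v_1,\dots,v_p\}$ and edge set $\{e_1,\dots,e_q\}$, a hypergraph $\mathcal{H}$ contains $F$ as a trace if there exist distinct vertices $w_1,\dots,w_p\in V(\mathcal{H})$ and distinct edges $f_1,\dots,f_q\in E(\mathcal{H})$ such that whenever $e_i=v_\alpha v_\beta$, we have $f_i\cap\{w_1,\dots,w_p\}=\{w_\alpha,w_\beta\}$. For $r\ge 2$, $ex_r(n,Tr(F))$ denotes the maximum number of edges of an $n$-vertex $r$-uniform hypergraph that does not contain $F$ as a trace. $K_{1,t}$ is the star with $t$ edges. For $v\ge k\ge s$, an $s$-$(v,k,\lambda)$ covering is a collection $\mathcal{C}$ of $k$-subsets (blocks) of a $v$-element set $X$ such that every $s$-subset of $X$ is contained in at least $\lambda$ blocks of $\mathcal{C}$; its size is $|\mathcal{C}|$. A minimal covering is one of minimum possible size. *)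

From mathcomp Require Import all_boot.
Set Implicit Arguments. Unset Strict Implicit. Unset Printing Implicit Defensive.

Definition uniform (n r : nat) (H : {set {set 'I_n}}) : bool :=
  [forall e in H, #|e| == r].

(* A graph F with vertex set 'I_p and edges E i = (v_alpha, v_beta), i : 'I_q. *)
Definition contains_trace (n p q : nat) (E : 'I_q -> 'I_p * 'I_p)
    (H : {set {set 'I_n}}) : bool :=
  [exists w : {ffun 'I_p -> 'I_n}, injectiveb w &&
    [exists f : {ffun 'I_q -> {set 'I_n}}, injectiveb f &&
      [forall i : 'I_q, (f i \in H) &&
         (f i :&: [set w j | j : 'I_p] == [set w (E i).1; w (E i).2])]]].

(* The star K_{1,t}: vertex 0 is the centre, vertices 1..t are the leaves. *)
Definition star_edges (t : nat) (i : 'I_t) : 'I_t.+1 * 'I_t.+1 :=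
  (ord0, lift ord0 i).

Definition ex_trace (n r p q : nat) (E : 'I_q -> 'I_p * 'I_p) : nat :=
  \max_(H : {set {set 'I_n}} | uniform r H && ~~ contains_trace E H) #|H|.

Definition is_covering (s v k lam : nat) (C : {set {set 'I_v}}) : bool :=
  [forall B in C, #|B| == k] &&
  [forall S : {set 'I_v}, (#|S| == s) ==> (lam <= #|[set B in C | S \subset B]|)].

Arguments is_covering : clear implicits.

Definition minimal_covering_size (s v k lam c : nat) : Prop :=
  exists C : {set {set 'I_v}},
    is_covering s v k lam C /\ #|C| = c /\
    (forall C' : {set {set 'I_v}}, is_covering s v k lam C' -> c <= #|C'|).
Arguments ex_trace : clear implicits.

From mathcomp Require Import all_boot zify.

Set Implicit Arguments. Unset Strict Implicit. Unset Printing Implicit Defensive.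

(* Split the a (r + t - 1) + b vertices into a large blocks of size r + t - 1
   and one small block of size b, and take as edges the r-subsets of a block
   that, in a large block, are not blocks of the covering C.  All edges of a
   trace of K_{1,t} contain its centre w0, so the trace lives in one block.  An
   edge e of it meets its vertex set W in two points, so |e :|: W| = r + t - 1
   exceeds the size of the small block.  In a large block, the (r-1)-set made of
   w0 and the vertices outside W is covered by some B in C, which adds a single
   leaf x to it; the edge through w0 and x lies inside B, hence equals B. *)

Section StarTrace.

Variable t : nat.

(* Centre and vertex set of a trace of K_{1,t}; the t edges are automatically
   distinct since their traces on W differ. *)
Definition star_trace (T : finType) (H : {set {set T}}) (w0 : T) (W : {set T}) :=
  [/\ w0 \in W, #|W| = t.+1 &
      forall x, x \in W -> x != w0 -> exists2 e, e \in H & e :&: W = [set w0; x]].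

Definition star_free (T : finType) (H : {set {set T}}) :=
  forall w0 W, ~ star_trace H w0 W.

Lemma contains_trace_star n (H : {set {set 'I_n}}) :
  contains_trace (@star_edges t) H -> exists w0 W, star_trace H w0 W.
Proof.
case/existsP=> w /andP[/injectiveP w_inj /existsP[f /andP[_ /forallP Hf]]].
exists (w ord0), [set w j | j : 'I_t.+1]; split.
- exact: imset_f.
- by rewrite card_imset // card_ord.
move=> _ /imsetP[j _ ->]; case: (unliftP ord0 j) => [i -> _|->]; last by rewrite eqxx.
by have /andP[fiH /eqP fiW] := Hf i; exists (f i).
Qed.

Lemma star_trace_sub (T : finType) (H H' : {set {set T}}) (w0 : T) (W : {set T}) :
  {in H, forall e : {set T}, w0 \in e -> e \in H'} ->
  star_trace H w0 W -> star_trace H' w0 W.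
Proof.
move=> sHH' [w0W cW HW]; split=> // x xW xw0.
have [e eH eW] := HW x xW xw0; exists e => //; apply: sHH' => //.
by have /subsetP := subsetIl e W; apply; rewrite eW set21.
Qed.

Lemma star_trace_leaf (T : finType) (H : {set {set T}}) (w0 : T) (W : {set T}) :
  0 < t -> star_trace H w0 W -> exists2 x, x \in W & x != w0.
Proof.
move=> t_gt0 [w0W cW _]; have : 0 < #|W :\ w0|.
  by move: cW; rewrite (cardsD1 w0) w0W; lia.
by case/card_gt0P=> x; rewrite !inE => /andP[xw0 xW]; exists x.
Qed.

Lemma star_free_imset (T T' : finType) (g : T -> T') (H : {set {set T}}) :
  0 < t -> injective g -> star_free H -> star_free [set g @: e | e : {set T} in H].
Proof.
move=> t_gt0 g_inj H_free w0' W' trW'; have [w0'W' cW' HW'] := trW'.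
have leaf_img x : x \in W' -> x != w0' -> [set w0'; x] \subset g @: [set: T].
  move=> xW' xw0'; have [_ /imsetP[e _ ->] eW'] := HW' x xW' xw0'.
  by rewrite -eW' (subset_trans (subsetIl _ _)) // imsetS // subsetT.
have W'_img : W' \subset g @: [set: T].
  have [x1 x1W' x1w0'] := star_trace_leaf t_gt0 trW'.
  apply/subsetP=> x xW'; have [-> | xw0'] := eqVneq x w0'.
    by apply: (subsetP (leaf_img x1 x1W' x1w0')); rewrite set21.
  by apply: (subsetP (leaf_img x xW' xw0')); rewrite set22.
have [w0 _ w0E] := imsetP (subsetP W'_img w0' w0'W').
have W'E : W' = g @: (g @^-1: W').
  apply/setP=> x; apply/idP/imsetP => [xW' | [y + ->]]; last by rewrite inE.
  by have [y _ eq_xy] := imsetP (subsetP W'_img x xW'); exists y; rewrite ?inE -eq_xy.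
apply: (H_free w0 (g @^-1: W')); split.
- by rewrite inE -w0E.
- by rewrite -cW' [in RHS]W'E card_imset.
move=> x; rewrite inE => gxW' xw0.
have gxw0' : g x != w0' by rewrite w0E (inj_eq g_inj).
have [_ /imsetP[e eH ->] eW'] := HW' _ gxW' gxw0'; exists e => //.
apply: (imset_inj g_inj); rewrite imsetI; last by move=> ? ? _ _ /g_inj.
by rewrite -W'E eW' w0E imsetU1 imset_set1.
Qed.

Lemma star_free_small (T : finType) r (H : {set {set T}}) :
  0 < t -> #|T| < r + t - 1 -> {in H, forall e : {set T}, #|e| = r} -> star_free H.
Proof.
move=> t_gt0 T_small H_r w0 W trW; have [_ cW HW] := trW.
have [x xW xw0] := star_trace_leaf t_gt0 trW.
have [e /H_r e_r eW] := HW x xW xw0.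
have := max_card (e :|: W); rewrite cardsU eW cards2 eq_sym xw0 e_r cW; lia.
Qed.

Lemma star_free_noncovering r (C : {set {set 'I_(r + t - 1)}}) :
  is_covering (r - 1) (r + t - 1) r 1 C ->
  star_free ([set S : {set 'I_(r + t - 1)} | #|S| == r] :\: C).
Proof.
move=> /andP[/forallP C_card /forallP C_cov] w0 W [w0W cW HW].
set S0 := w0 |: ~: W.
have [cS0 S0_lt_r] : #|S0| = r - 1 /\ #|S0| < r.
  have := cardsC W; rewrite cardsU1 !inE w0W card_ord cW; lia.
have [B BC S0B] : exists2 B, B \in C & S0 \subset B.
  have := C_cov S0; rewrite cS0 eqxx /= card_gt0 => /set0Pn[B].
  by rewrite inE => /andP[BC S0B]; exists B.
have cB : #|B| = r by apply/eqP; have := C_card B; rewrite BC.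
have [_ [x xB]] : S0 \subset B /\ exists2 x, x \in B & x \notin S0.
  by apply/properP; rewrite properEcard S0B cB.
rewrite !inE negb_or negbK => /andP[xw0 xW].
have [S] := HW x xW xw0; rewrite !inE => /andP[SC /eqP cS] SW.
suff SB : S \subset B.
  have SeB : S = B by apply/eqP; rewrite eqEcard SB cS cB leqnn.
  by rewrite SeB BC in SC.
apply/subsetP=> y yS; have [yW | yW] := boolP (y \in W); last first.
  by apply: (subsetP S0B); rewrite !inE yW orbT.
have : y \in S :&: W by rewrite inE yS.
rewrite SW !inE => /orP[] /eqP-> //.
by apply: (subsetP S0B); rewrite !inE eqxx.
Qed.

End StarTrace.

Section DisjointUnion.

Variables T1 T2 : finType.

Definition hsum (H1 : {set {set T1}}) (H2 : {set {set T2}}) : {set {set T1 + T2}} :=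
  [set inl @: e | e : {set T1} in H1] :|: [set inr @: e | e : {set T2} in H2].

Definition hcopies (H : {set {set T2}}) : {set {set T1 * T2}} :=
  [set pair i @: e | i : T1 in [set: T1], e : {set T2} in H].

Lemma card_hsum (H1 : {set {set T1}}) (H2 : {set {set T2}}) :
  set0 \notin H2 -> #|hsum H1 H2| = #|H1| + #|H2|.
Proof.
move=> H2_0; rewrite cardsU !card_imset; last 2 first.
- exact/imset_inj/inr_inj.
- exact/imset_inj/inl_inj.
suff -> : [set inl @: e | e : {set T1} in H1] :&: [set inr @: e | e : {set T2} in H2]
    = set0 by rewrite cards0 subn0.
apply/setP=> E; rewrite !inE; apply/negbTE/andP=> -[/imsetP[e1 _ ->] /imsetP[e2 e2H2]].
have [x xe2] : exists x, x \in e2 by apply/set0Pn; apply: contraNneq H2_0 => <-.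
by move/setP/(_ (inr x)); rewrite imset_f // => /imsetP[].
Qed.

Lemma card_hcopies (H : {set {set T2}}) :
  set0 \notin H -> #|hcopies H| = #|T1| * #|H|.
Proof.
move=> H0; rewrite /hcopies curry_imset2X card_in_imset ?cardsX ?cardsT //.
move=> [i e] [j e'] /=; rewrite !inE => /andP[_ eH] _ ee'.
have [x xe] : exists x, x \in e by apply/set0Pn; apply: contraNneq H0 => <-.
have : (i, x) \in pair j @: e' by rewrite -ee' imset_f.
case/imsetP=> _ _ [ij _]; subst j; congr pair.
by apply: imset_inj ee' => ? ? [].
Qed.

Lemma hsum_edge_card r (H1 : {set {set T1}}) (H2 : {set {set T2}}) :
  {in H1, forall e : {set T1}, #|e| = r} -> {in H2, forall e : {set T2}, #|e| = r} ->
  {in hsum H1 H2, forall e : {set T1 + T2}, #|e| = r}.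
Proof.
by move=> H1_r H2_r _ /setUP[] /imsetP[e eH ->];
  rewrite card_imset ?(H1_r, H2_r) //; [exact: inl_inj | exact: inr_inj].
Qed.

Lemma hcopies_edge_card r (H : {set {set T2}}) :
  {in H, forall e : {set T2}, #|e| = r} ->
  {in hcopies H, forall e : {set T1 * T2}, #|e| = r}.
Proof. by move=> H_r _ /imset2P[i e _ eH ->]; rewrite card_imset ?H_r // => ? ? []. Qed.

Lemma star_free_hsum t (H1 : {set {set T1}}) (H2 : {set {set T2}}) :
  0 < t -> star_free t H1 -> star_free t H2 -> star_free t (hsum H1 H2).
Proof.
move=> t_gt0 H1_free H2_free [y|y] W /star_trace_sub trW.
- apply: (star_free_imset t_gt0 (@inl_inj T1 T2) H1_free (trW _ _)).
  move=> E /setUP[] /imsetP[e eH ->]; first by move=> _; rewrite imset_f.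
  by case/imsetP.
- apply: (star_free_imset t_gt0 (@inr_inj T1 T2) H2_free (trW _ _)).
  move=> E /setUP[] /imsetP[e eH ->]; last by move=> _; rewrite imset_f.
  by case/imsetP.
Qed.

Lemma star_free_hcopies t (H : {set {set T2}}) :
  0 < t -> star_free t H -> star_free t (hcopies H).
Proof.
move=> t_gt0 H_free [i y] W /star_trace_sub trW.
have pair_inj : injective (@pair T1 T2 i) by move=> ? ? [].
apply: (star_free_imset t_gt0 pair_inj H_free (trW _ _)).
move=> E /imset2P[j e _ eH ->] /imsetP[_ _ [<- _]].
by rewrite imset_f.
Qed.

End DisjointUnion.

Lemma card_noncovering s v k lam (C : {set {set 'I_v}}) :
  is_covering s v k lam C ->
  #|[set S : {set 'I_v} | #|S| == k] :\: C| = 'C(v, k) - #|C|.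
Proof.
case/andP=> /forallP C_k _; rewrite cardsD card_draws card_ord (setIidPr _) //.
by apply/subsetP=> B BC; rewrite inE; have := C_k B; rewrite BC.
Qed.

Lemma ex_trace_star_free (V : finType) n r t (H : {set {set V}}) :
  0 < t -> #|V| <= n -> {in H, forall e : {set V}, #|e| = r} -> star_free t H ->
  #|H| <= ex_trace n r t.+1 t (@star_edges t).
Proof.
move=> t_gt0 Vn H_r H_free.
pose g v : 'I_n := widen_ord Vn (enum_rank v).
have g_inj : injective g by move=> u v /(congr1 val) /= /val_inj; apply: enum_rank_inj.
rewrite -(card_imset (mem H) (imset_inj g_inj)); apply: leq_bigmax_cond.
apply/andP; split.
  by apply/forallP=> E; apply/implyP=> /imsetP[e eH ->]; rewrite card_imset ?H_r.
apply/negP=> /contains_trace_star[w0 [W]]; exact: star_free_imset.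
Qed.

Theorem mainTheorem1 (r t a b c : nat) :
  2 <= r -> 2 <= t -> b <= r + t - 2 ->
  minimal_covering_size (r - 1) (r + t - 1) r 1 c ->
  a * ('C(r + t - 1, r) - c) + 'C(b, r)
    <= ex_trace (a * (r + t - 1) + b) r t.+1 t (@star_edges t).
Proof.
move=> r_ge2 t_ge2 b_le [C [C_cov [<- _]]].
have t_gt0 : 0 < t by apply: ltnW.
pose Dm := [set S : {set 'I_(r + t - 1)} | #|S| == r] :\: C.
pose Db := [set S : {set 'I_b} | #|S| == r].
have Dm_r : {in Dm, forall S : {set 'I_(r + t - 1)}, #|S| = r}.
  by move=> S; rewrite !inE => /andP[_ /eqP].
have Db_r : {in Db, forall S : {set 'I_b}, #|S| = r} by move=> S; rewrite inE => /eqP.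
have no_set0 (T : finType) (D : {set {set T}}) :
    {in D, forall S : {set T}, #|S| = r} -> set0 \notin D.
  by move=> D_r; apply/negP=> /D_r; rewrite cards0; lia.
have <- : #|hsum (hcopies 'I_a Dm) Db| = a * ('C(r + t - 1, r) - #|C|) + 'C(b, r).
  rewrite card_hsum ?card_hcopies ?no_set0 // (card_noncovering C_cov).
  by rewrite card_draws !card_ord.
apply: ex_trace_star_free => //.
- by rewrite card_sum card_prod !card_ord.
- exact/hsum_edge_card/Db_r/hcopies_edge_card.
apply: star_free_hsum => //.
  exact/star_free_hcopies/star_free_noncovering.
by apply: (star_free_small (r := r)); rewrite ?card_ord //; lia.
Qed.
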